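(* Let $H$ satisfy Condition (H). For every $u\in(0,\partial_+)$ there is $v\in(u,\partial_+)$ such that for all $t\ge0$ and all $(x,p)\in(-v,v)\times\mathbb R$ with $t<t_{x,p}$ and $X_t^{x,p}\in(-u,u)$, one has $X_s^{x,p}\in(-v,v)$ for all $s\in[0,t]$.
   Context: $\mathbb K$ is either $\mathbb R$ or $[-1,1]$, with interior $\mathbb K^\circ$; $\partial_-=-\infty,\partial_+=+\infty$ if $\mathbb K=\mathbb R$ and $\partial_-=-1,\partial_+=1$ if $\mathbb K=[-1,1]$. The Lagrangian is $\mathcal L(x,v)=\sup_p(pv-H(x,p))$. The Hamilton equations are $\dot X=\partial_pH(X,P)$, $\dot P=-\partial_xH(X,P)$; $(X_s^{x,p},P_s^{x,p})$ is the solution from $(x,p)$ on its maximal interval of existence $[0,t_{x,p})$. Condition (H) on $H:\mathbb K\times\mathbb R\to\mathbb R$: $H(x,0)=0$ for all $x$, and (H1) $H$ is $C^2$ with $\partial_p^2H>0$ on $\mathbb K\times\mathbb R$; if $\mathbb K=[-1,1]$, $H$ is the restriction of a $C^2$ function on $(-1-\epsilon,1+\epsilon)\times\mathbb R$ for some $\epsilon>0$. (H2) for every compact $K\subseteq\mathbb K^\circ$ there is $\theta_K:[0,\infty)\to[0,\infty)$ with $\theta_K(r)/r\to\infty$ as $r\to\infty$; for every $M\ge0$ a constant $k_M$ with $\theta_K(r+m)\le k_M(1+\theta_K(r))$ for all $m\in[0,M]$, $r\ge0$; constants $c_K,C_K$ with $\mathcal L(x,v)\ge\theta_K(|v|)-c_K$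 and $|\partial_x\mathcal L(x,v)|+|\partial_v\mathcal L(x,v)|\le C_K\theta_K(|v|)$ for all $x\in K,v\in\mathbb R$. (H3) for each compact $K\subseteq\mathbb K^\circ$, $\lim_{|p|\to\infty}\inf_{x\in K}H(x,p)/|p|=\infty$; if $\mathbb K=[-1,1]$ moreover $\lim_{p\to\infty}H(-1,p)/p=\infty$ and $\lim_{p\to-\infty}H(1,p)/(-p)=\infty$. (H4) $\lim_{x\to\partial_-}\operatorname{argmin}_pH(x,p)=-\infty$ and $\lim_{x\to\partial_+}\operatorname{argmin}_pH(x,p)=+\infty$. (H5) there are $(y_n^+,q_n^+)\in\mathbb K^\circ\times(0,\infty)$ converging to $(\partial_+,+\infty)$ with $\partial_pH(y_n^+,q)\ge0$ for $q\ge q_n^+$ and $-\partial_xH(y,q_n^+)\ge0$ for $y\ge y_n^+$, and $(y_n^-,q_n^-)\in\mathbb K^\circ\times(-\infty,0)$ converging to $(\partial_-,-\infty)$ with $\partial_pH(y_n^-,q)\le0$ for $q\le q_n^-$ and $-\partial_xH(y,q_n^-)\le0$ for $y\le y_n^-$. *)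

From Stdlib Require Import Reals Lra ClassicalEpsilon.
Open Scope R_scope.

(* The two possible state spaces: K = R or K = [-1,1]. *)
Inductive Kdom : Type := KR | KI.

Definition inK (k : Kdom) (x : R) : Prop :=
  match k with KR => True | KI => -1 <= x <= 1 end.

Definition inKint (k : Kdom) (x : R) : Prop :=
  match k with KR => True | KI => -1 < x < 1 end.

(* x < ∂_+  (∂_+ = +∞ or 1) *)
Definition lt_dplus (k : Kdom) (x : R) : Prop :=
  match k with KR => True | KI => x < 1 end.

(* "x is in a neighbourhood of ∂_- inside K°", parametrised by a ∈ K°:
   K = R : x < a ;  K = [-1,1] : -1 < x < a *)
Definition near_dminus (k : Kdom) (a x : R) : Prop :=
  match k with KR => x < a | KI => -1 < x < a end.
Definition near_dplus (k : Kdom) (a x : R) : Prop :=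
  match k with KR => a < x | KI => a < x < 1 end.

Definition cv_dplus (k : Kdom) (y : nat -> R) : Prop :=
  match k with KR => cv_infty y | KI => Un_cv y 1 end.
Definition cv_dminus (k : Kdom) (y : nat -> R) : Prop :=
  match k with KR => cv_infty (fun n => - y n) | KI => Un_cv y (-1) end.

Definition strip (k : Kdom) (eps x : R) : Prop :=
  match k with KR => True | KI => -1 - eps < x < 1 + eps end.

Definition cont2 (f : R -> R -> R) (x p : R) : Prop :=
  forall e, 0 < e -> exists d, 0 < d /\
    forall x' p', Rabs (x' - x) < d -> Rabs (p' - p) < d ->
      Rabs (f x' p' - f x p) < e.

Definition C2_on (U : R -> Prop) (H Hx Hp Hxx Hxp Hpx Hpp : R -> R -> R) : Prop :=
  forall x p, U x ->
    derivable_pt_lim (fun y => H y p) x (Hx x p) /\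
    derivable_pt_lim (fun q => H x q) p (Hp x p) /\
    derivable_pt_lim (fun y => Hx y p) x (Hxx x p) /\
    derivable_pt_lim (fun q => Hx x q) p (Hxp x p) /\
    derivable_pt_lim (fun y => Hp y p) x (Hpx x p) /\
    derivable_pt_lim (fun q => Hp x q) p (Hpp x p) /\
    cont2 H x p /\ cont2 Hx x p /\ cont2 Hp x p /\
    cont2 Hxx x p /\ cont2 Hxp x p /\ cont2 Hpx x p /\ cont2 Hpp x p.

(* Lagrangian L(x,v) = sup_p (p v - H(x,p)) (0 if the sup is not finite;
   under Condition (H) it is finite for x ∈ K°). *)
Definition lag_set (H : R -> R -> R) (x v : R) : R -> Prop :=
  fun y => exists p, y = p * v - H x p.

Definition Lag (H : R -> R -> R) (x v : R) : R :=
  match excluded_middle_informative (exists l, is_lub (lag_set H x v) l) with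
  | left h => proj1_sig (constructive_indefinite_description _ h)
  | right _ => 0
  end.

Definition compact_in_int (k : Kdom) (C : R -> Prop) : Prop :=
  compact C /\ (forall x, C x -> inKint k x).

Definition H1 (k : Kdom) (H : R -> R -> R) : Prop :=
  exists eps, 0 < eps /\
  exists Hx Hp Hxx Hxp Hpx Hpp : R -> R -> R,
    C2_on (strip k eps) H Hx Hp Hxx Hxp Hpx Hpp /\
    (forall x p, inK k x -> Hpp x p > 0).

Definition H2 (k : Kdom) (H : R -> R -> R) : Prop :=
  forall C, compact_in_int k C ->
  exists theta : R -> R,
    (forall r, 0 <= r -> 0 <= theta r) /\
    (forall M, exists R0, forall r, R0 < r -> M < theta r / r) /\
    (forall M, 0 <= M -> exists kM, forall m r, 0 <= m <= M -> 0 <= r ->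
        theta (r + m) <= kM * (1 + theta r)) /\
    exists cK CK,
      forall x v, C x ->
        Lag H x v >= theta (Rabs v) - cK /\
        exists a b,
          derivable_pt_lim (fun y => Lag H y v) x a /\
          derivable_pt_lim (fun w => Lag H x w) v b /\
          Rabs a + Rabs b <= CK * theta (Rabs v).

Definition H3 (k : Kdom) (H : R -> R -> R) : Prop :=
  (forall C, compact_in_int k C ->
     forall M, exists R0, forall p x, R0 < Rabs p -> C x -> M <= H x p / Rabs p) /\
  match k with
  | KR => True
  | KI =>
      (forall M, exists R0, forall p, R0 < p -> M <= H (-1) p / p) /\
      (forall M, exists R0, forall p, p < R0 -> M <= H 1 p / (- p))
  end.

Definition is_argmin (H : R -> R -> R) (x q : R) : Prop :=
  forall p, H x q <= H x p.

Definition H4 (k : Kdom) (H : R -> R -> R) : Prop :=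
  (forall M, exists a, inKint k a /\ forall x q,
     near_dminus k a x -> is_argmin H x q -> q < - M) /\
  (forall M, exists a, inKint k a /\ forall x q,
     near_dplus k a x -> is_argmin H x q -> M < q).

Definition H5 (k : Kdom) (H : R -> R -> R) : Prop :=
  (exists y q : nat -> R,
     (forall n, inKint k (y n) /\ 0 < q n) /\
     cv_dplus k y /\ cv_infty q /\
     (forall n r l, q n <= r ->
        derivable_pt_lim (fun r' => H (y n) r') r l -> l >= 0) /\
     (forall n z l, inK k z -> y n <= z ->
        derivable_pt_lim (fun z' => H z' (q n)) z l -> - l >= 0)) /\
  (exists y q : nat -> R,
     (forall n, inKint k (y n) /\ q n < 0) /\
     cv_dminus k y /\ cv_infty (fun n => - q n) /\
     (forall n r l, r <= q n ->
        derivable_pt_lim (fun r' => H (y n) r') r l -> l <= 0) /\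
     (forall n z l, inK k z -> z <= y n ->
        derivable_pt_lim (fun z' => H z' (q n)) z l -> - l <= 0)).

Definition condH (k : Kdom) (H : R -> R -> R) : Prop :=
  (forall x, inK k x -> H x 0 = 0) /\
  H1 k H /\ H2 k H /\ H3 k H /\ H4 k H /\ H5 k H.

Definition deriv_within (a b : R) (f : R -> R) (s l : R) : Prop :=
  forall e, 0 < e -> exists d, 0 < d /\
    forall h, h <> 0 -> Rabs h < d -> a <= s + h <= b ->
      Rabs ((f (s + h) - f s) / h - l) < e.

(* (X,P) solves Hamilton's equations on [0,t] in K × R:
   X' = ∂_p H(X,P), P' = -∂_x H(X,P). *)
Definition hamilton_sol (k : Kdom) (H : R -> R -> R) (t : R) (X P : R -> R) : Prop :=
  forall s, 0 <= s <= t ->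
    inK k (X s) /\
    exists a b,
      deriv_within 0 t X s a /\ deriv_within 0 t P s b /\
      derivable_pt_lim (fun q => H (X s) q) (P s) a /\
      derivable_pt_lim (fun y => H y (P s)) (X s) (- b).

(* By (H5) there is, for every [u < ∂_+], a point [(Y, Q)] with [u < Y] such that the
   Hamiltonian vector field points into the quadrant [X >= Y, P >= Q] along both of its
   faces; a Lipschitz estimate on the flow makes that quadrant forward invariant.  By (H4)
   the minimiser of [H(x, .)] exceeds [Q] once [x] is close to [∂_+], so a trajectory whose
   maximum [X(s) >= v] is reached at an interior time, where [∂_p H(X, P) = 0], has
   [P(s) >= Q]: it is in the quadrant and cannot come back below [u].  The point reflection
   [(x, p) -> (-x, -p)] turns the same argument into the bound from below. *)

From Stdlib Require Import Reals Lra Lia Classical.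
Open Scope R_scope.

Definition continuous_on (a b : R) (f : R -> R) : Prop :=
  forall s, a <= s <= b -> forall e, 0 < e -> exists d, 0 < d /\
    forall s', a <= s' <= b -> Rabs (s' - s) < d -> Rabs (f s' - f s) < e.

Lemma continuous_on_sub a b a' b' f :
  continuous_on a b f -> a <= a' -> b' <= b -> continuous_on a' b' f.
Proof.
  intros Hc Ha Hb s Hs e He. destruct (Hc s ltac:(lra) e He) as [d [Hd Hd']].
  exists d; split; auto. intros s' Hs' Hss. apply Hd'; auto; lra.
Qed.

Lemma continuous_on_Rmax_gap a b c c' f g :
  continuous_on a b f -> continuous_on a b g ->
  continuous_on a b (fun s => Rmax (c - f s) (c' - g s)).
Proof.
  intros Hf Hg s Hs e He.
  destruct (Hf s Hs e He) as [d1 [Hd1 H1]]. destruct (Hg s Hs e He) as [d2 [Hd2 H2]].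
  exists (Rmin d1 d2); split; [apply Rmin_pos; auto|].
  intros s' Hs' Hss.
  assert (A := H1 s' Hs' ltac:(eapply Rlt_le_trans; [exact Hss|apply Rmin_l])).
  assert (B := H2 s' Hs' ltac:(eapply Rlt_le_trans; [exact Hss|apply Rmin_r])).
  revert A B. unfold Rmax, Rabs; repeat destruct Rle_dec; repeat destruct Rcase_abs; lra.
Qed.

(* Clamping to [a, b] turns a function continuous on [a, b] into one that is continuous
   everywhere, which is what the Stdlib extreme value and mean value theorems expect. *)
Definition clamp (a b s : R) : R := Rmin b (Rmax a s).

Lemma clamp_in a b s : a <= b -> a <= clamp a b s <= b.
Proof. intros; unfold clamp, Rmin, Rmax; repeat destruct Rle_dec; lra. Qed.

Lemma clamp_id a b s : a <= s <= b -> clamp a b s = s.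
Proof. intros; unfold clamp, Rmin, Rmax; repeat destruct Rle_dec; lra. Qed.

Lemma clamp_1_lipschitz a b s s' : a <= b -> Rabs (clamp a b s - clamp a b s') <= Rabs (s - s').
Proof.
  intros; unfold clamp, Rmin, Rmax, Rabs; repeat destruct Rle_dec; repeat destruct Rcase_abs; lra.
Qed.

Lemma continuity_pt_clamp a b f x :
  a <= b -> continuous_on a b f -> continuity_pt (fun s => f (clamp a b s)) x.
Proof.
  intros Hab Hc e He.
  destruct (Hc (clamp a b x) (clamp_in _ _ _ Hab) e He) as [d [Hd Hd']].
  exists d; split; [lra|]. intros y [_ Hy]. simpl in *. unfold R_dist in *.
  apply Hd'; [apply clamp_in; auto|].
  eapply Rle_lt_trans; [apply clamp_1_lipschitz; auto|exact Hy].
Qed.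

Lemma continuous_on_attains_max a b f : a <= b -> continuous_on a b f ->
  exists r, a <= r <= b /\ forall s, a <= s <= b -> f s <= f r.
Proof.
  intros Hab Hc.
  destruct (continuity_ab_maj (fun s => f (clamp a b s)) a b Hab
     (fun c _ => continuity_pt_clamp a b f c Hab Hc)) as [M [HM HM']].
  exists M; split; auto. intros s Hs. specialize (HM s Hs).
  rewrite !clamp_id in HM; auto.
Qed.

Lemma mvt_lower_bound f df a b K : a < b -> continuous_on a b f ->
  (forall x, a < x < b -> derivable_pt_lim f x (df x)) ->
  (forall x, a < x < b -> K <= df x) -> K * (b - a) <= f b - f a.
Proof.
  intros Hab Hc Hd HK.
  set (g := fun s => f (clamp a b s)).
  assert (Hg : forall c, a < c < b -> derivable_pt_lim g c (df c)).
  { intros c Hc'. apply derivable_pt_lim_locally_ext with f a b; auto.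
    intros y Hy. unfold g. rewrite clamp_id; lra. }
  pose (pr := fun c (H : a < c < b) => exist (fun l => derivable_pt_lim g c l) (df c) (Hg c H)).
  destruct (MVT g id a b pr (fun c _ => derivable_pt_id c) Hab
     (fun c _ => continuity_pt_clamp a b f c ltac:(lra) Hc)
     (fun c _ => derivable_continuous_pt _ _ (derivable_pt_id c))) as [c [Pc Heq]].
  rewrite derive_pt_id in Heq. unfold derive_pt, pr in Heq. simpl in Heq.
  unfold id, g in Heq. rewrite !clamp_id in Heq by lra.
  specialize (HK c Pc). nra.
Qed.

Lemma mvt_Rabs_bound (G G' : R -> R) a b B :
  (forall z, Rmin a b <= z <= Rmax a b -> derivable_pt_lim G z (G' z) /\ Rabs (G' z) <= B) ->
  Rabs (G a - G b) <= B * Rabs (a - b).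
Proof.
  intros HG. destruct (Rtotal_order a b) as [Hab|[->|Hab]].
  - destruct (MVT_cor2 G G' a b Hab) as [c [Hc Hc']].
    { intros c Hc. apply HG. rewrite Rmin_left, Rmax_right; lra. }
    assert (HB : Rabs (G' c) <= B) by (apply HG; rewrite Rmin_left, Rmax_right; lra).
    rewrite <- Rabs_Ropp, Ropp_minus_distr, Hc, Rabs_mult, <- (Rabs_Ropp (a - b)),
      Ropp_minus_distr.
    apply Rmult_le_compat_r; auto. apply Rabs_pos.
  - rewrite !Rminus_diag, Rabs_R0; lra.
  - destruct (MVT_cor2 G G' b a Hab) as [c [Hc Hc']].
    { intros c Hc. apply HG. rewrite Rmin_right, Rmax_left; lra. }
    assert (HB : Rabs (G' c) <= B) by (apply HG; rewrite Rmin_right, Rmax_left; lra).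
    rewrite Hc, Rabs_mult. apply Rmult_le_compat_r; auto. apply Rabs_pos.
Qed.

Lemma deriv_within_derivable_pt_lim a b f s l :
  a < s < b -> deriv_within a b f s l -> derivable_pt_lim f s l.
Proof.
  intros Hs Hf e He. destruct (Hf e He) as [d [Hd Hd']].
  assert (Hp : 0 < Rmin d (Rmin (s - a) (b - s))) by (repeat apply Rmin_pos; lra).
  exists (mkposreal _ Hp). intros h Hh Hhd. simpl in Hhd.
  assert (Rabs h < d) by (eapply Rlt_le_trans; [exact Hhd|apply Rmin_l]).
  assert (Rabs h < s - a)
    by (eapply Rlt_le_trans; [exact Hhd|eapply Rle_trans; [apply Rmin_r|apply Rmin_l]]).
  assert (Rabs h < b - s)
    by (eapply Rlt_le_trans; [exact Hhd|eapply Rle_trans; [apply Rmin_r|apply Rmin_r]]).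
  apply Hd'; auto. revert H0 H1; unfold Rabs; destruct Rcase_abs; lra.
Qed.

Lemma deriv_within_continuous_on a b f :
  (forall s, a <= s <= b -> exists l, deriv_within a b f s l) -> continuous_on a b f.
Proof.
  intros Hf s Hs e He. destruct (Hf s Hs) as [l Hl].
  destruct (Hl 1 ltac:(lra)) as [d [Hd Hd']].
  assert (Hl0 : 0 < Rabs l + 1) by (pose proof (Rabs_pos l); lra).
  exists (Rmin d (e / (Rabs l + 1))). split.
  { apply Rmin_pos; auto. apply Rdiv_lt_0_compat; lra. }
  intros s' Hs' Hss.
  destruct (Req_dec s' s) as [->|Hne].
  { rewrite Rminus_diag, Rabs_R0; lra. }
  set (h := s' - s).
  assert (Hh : h <> 0) by (unfold h; lra).
  assert (Hhd : Rabs h < d) by (eapply Rlt_le_trans; [exact Hss|apply Rmin_l]).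
  assert (Hhe : Rabs h < e / (Rabs l + 1)) by (eapply Rlt_le_trans; [exact Hss|apply Rmin_r]).
  specialize (Hd' h Hh Hhd ltac:(unfold h; lra)).
  replace (s + h) with s' in Hd' by (unfold h; ring).
  set (q := (f s' - f s) / h) in Hd'.
  replace (f s' - f s) with (q * h) by (unfold q; field; auto).
  rewrite Rabs_mult.
  assert (Rabs q < Rabs l + 1).
  { pose proof (Rabs_triang (q - l) l). replace (q - l + l) with q in H by ring. lra. }
  assert (Rabs h * (Rabs l + 1) < e).
  { apply Rmult_lt_compat_r with (r := Rabs l + 1) in Hhe; auto.
    unfold Rdiv in Hhe. rewrite Rmult_assoc, Rinv_l in Hhe by lra. lra. }
  pose proof (Rabs_pos q). pose proof (Rabs_pos h). nra.
Qed.

Lemma last_time_above f a b c : a <= b -> continuous_on a b f -> c <= f a -> f b < c ->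
  exists r, a <= r < b /\ c <= f r /\ forall s, r < s <= b -> f s < c.
Proof.
  intros Hab Hf Ha Hb.
  set (E := fun s => a <= s <= b /\ c <= f s).
  assert (Hbd : bound E) by (exists b; intros s [Hs _]; lra).
  destruct (completeness E Hbd (ex_intro _ a (conj (conj (Rle_refl a) Hab) Ha)))
    as [r [Hub Hlub]].
  assert (Har : a <= r) by (apply Hub; split; auto; lra).
  assert (Hrb : r <= b) by (apply Hlub; intros s [Hs _]; lra).
  assert (Hfr : c <= f r).
  { destruct (Rle_dec c (f r)) as [|Hn]; auto. exfalso.
    destruct (Hf r ltac:(lra) (c - f r) ltac:(lra)) as [d [Hd Hd']].
    assert (r <= r - d / 2); [|lra].
    apply Hlub. intros s [Hs Hfs]. destruct (Rle_dec s (r - d / 2)); auto.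
    assert (s <= r) by (apply Hub; split; auto).
    assert (Rabs (s - r) < d) by (unfold Rabs; destruct Rcase_abs; lra).
    specialize (Hd' s Hs H0). revert Hd'; unfold Rabs; repeat destruct Rcase_abs; lra. }
  exists r. split; [|split; auto].
  - split; auto. destruct (Req_dec r b) as [->|]; lra.
  - intros s Hs. destruct (Rlt_dec (f s) c) as [|Hn]; auto.
    assert (s <= r) by (apply Hub; split; lra). lra.
Qed.

Lemma sink_rate_bound f df a b c K : a <= b -> continuous_on a b f ->
  (forall s, a < s < b -> derivable_pt_lim f s (df s)) ->
  c <= f a -> 0 <= K -> (forall s, a < s < b -> f s < c -> - K <= df s) ->
  c - K * (b - a) <= f b.
Proof.
  intros Hab Hf Hdf Ha HK Hsink.
  destruct (Rle_dec c (f b)) as [|Hb]; [nra|].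
  destruct (last_time_above f a b c Hab Hf Ha ltac:(lra)) as [r [Hr [Hfr Hbelow]]].
  assert (Hmvt : - K * (b - r) <= f b - f r).
  { apply mvt_lower_bound with df; try lra.
    - eapply continuous_on_sub; eauto; lra.
    - intros x Hx; apply Hdf; lra.
    - intros x Hx. apply Hsink; [lra|]. apply Hbelow; lra. }
  nra.
Qed.

Lemma continuous_on_closed_ge f a b s0 sg c : continuous_on a b f ->
  a <= s0 <= sg -> sg <= b ->
  c <= f s0 -> (forall r, s0 <= r < sg -> c <= f r) -> c <= f sg.
Proof.
  intros Hf H1 H2 H3 H4. destruct (Rle_dec c (f sg)) as [|Hn]; auto. exfalso.
  destruct (Req_dec sg s0) as [->|Hne]; [lra|].
  destruct (Hf sg ltac:(lra) (c - f sg) ltac:(lra)) as [d [Hd Hd']].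
  set (r := Rmax s0 (sg - d / 2)).
  assert (Hr1 : s0 <= r) by apply Rmax_l.
  assert (Hr2 : sg - d / 2 <= r) by apply Rmax_r.
  assert (Hr3 : r < sg) by (unfold r, Rmax; destruct Rle_dec; lra).
  specialize (H4 r ltac:(lra)).
  assert (Rabs (r - sg) < d) by (unfold Rabs; destruct Rcase_abs; lra).
  specialize (Hd' r ltac:(lra) H).
  revert Hd'; unfold Rabs; destruct Rcase_abs; lra.
Qed.

Lemma le_0_of_continuity_left f x a : a < x -> continuity_pt f x ->
  (forall y, a < y < x -> f y < 0) -> f x <= 0.
Proof.
  intros Hax Hc Hneg. destruct (Rle_dec (f x) 0) as [|Hn]; auto. exfalso.
  destruct (Hc (f x) ltac:(lra)) as [alp [Halp Hclose]].
  set (y := Rmax ((a + x) / 2) (x - alp / 2)).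
  assert (Hy1 : (a + x) / 2 <= y) by apply Rmax_l.
  assert (Hy2 : x - alp / 2 <= y) by apply Rmax_r.
  assert (Hy3 : y < x) by (unfold y, Rmax; destruct Rle_dec; lra).
  assert (Hdy : D_x no_cond x y) by (split; [exact I|apply Rgt_not_eq; lra]).
  assert (Hdist : R_dist y x < alp) by (unfold R_dist, Rabs; destruct (Rcase_abs (y - x)); lra).
  specialize (Hclose y (conj Hdy Hdist)). specialize (Hneg y ltac:(lra)).
  simpl in Hclose. unfold R_dist in Hclose.
  revert Hclose; unfold Rabs; destruct Rcase_abs; lra.
Qed.

Lemma inK_between k a b z : inK k a -> inK k b -> Rmin a b <= z <= Rmax a b -> inK k z.
Proof. destruct k; simpl; auto. unfold Rmin, Rmax; repeat destruct Rle_dec; lra. Qed.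

Lemma inK_Rmax k a b : inK k a -> inK k b -> inK k (Rmax a b).
Proof. destruct k; simpl; auto. unfold Rmax; destruct Rle_dec; lra. Qed.

Lemma inK_opp k x : inK k x -> inK k (- x).
Proof. destruct k; simpl; auto; lra. Qed.

Lemma inKint_opp k x : inKint k x -> inKint k (- x).
Proof. destruct k; simpl; auto; lra. Qed.

Lemma inKint_inK k x : inKint k x -> inK k x.
Proof. destruct k; simpl; auto; lra. Qed.

Lemma Rabs_between a b z c d : Rabs (a - c) < d -> Rabs (b - c) < d ->
  Rmin a b <= z <= Rmax a b -> Rabs (z - c) < d.
Proof. unfold Rmin, Rmax, Rabs; repeat destruct Rle_dec; repeat destruct Rcase_abs; lra. Qed.

Lemma Rabs_Rmax_near z w c d : Rabs (z - c) < d -> w <= c -> Rabs (Rmax z w - c) < d.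
Proof. unfold Rmax, Rabs; repeat destruct Rle_dec; repeat destruct Rcase_abs; lra. Qed.

Lemma Rabs_mid_near a b c d : Rabs (a - c) < d -> a <= b <= c -> Rabs (b - c) < d.
Proof. unfold Rabs; repeat destruct Rcase_abs; lra. Qed.

Lemma cont2_locally_bounded f x0 p0 : cont2 f x0 p0 -> exists d, 0 < d /\
  forall x p, Rabs (x - x0) < d -> Rabs (p - p0) < d -> Rabs (f x p) <= Rabs (f x0 p0) + 1.
Proof.
  intros Hf. destruct (Hf 1 ltac:(lra)) as [d [Hd Hd']]. exists d; split; auto.
  intros x p H1 H2. specialize (Hd' x p H1 H2).
  pose proof (Rabs_triang (f x p - f x0 p0) (f x0 p0)).
  replace (f x p - f x0 p0 + f x0 p0) with (f x p) in H by ring. lra.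
Qed.

Lemma lipschitz_of_bounded_partials k (F Fx Fp : R -> R -> R) x0 p0 d B :
  (forall x p, inK k x -> derivable_pt_lim (fun y => F y p) x (Fx x p) /\
                         derivable_pt_lim (fun q => F x q) p (Fp x p)) ->
  (forall x p, Rabs (x - x0) < d -> Rabs (p - p0) < d ->
     Rabs (Fx x p) <= B /\ Rabs (Fp x p) <= B) ->
  forall x p x' p', inK k x -> inK k x' -> Rabs (x - x0) < d -> Rabs (p - p0) < d ->
    Rabs (x' - x0) < d -> Rabs (p' - p0) < d ->
    Rabs (F x p - F x' p') <= B * (Rabs (x - x') + Rabs (p - p')).
Proof.
  intros HD HB x p x' p' Hx Hx' H1 H2 H3 H4.
  assert (A1 : Rabs (F x p - F x' p) <= B * Rabs (x - x')).
  { apply (mvt_Rabs_bound (fun y => F y p) (fun y => Fx y p)). intros z Hz. split.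
    - apply HD. apply inK_between with x x'; auto.
    - apply HB; auto. apply Rabs_between with x x'; auto. }
  assert (A2 : Rabs (F x' p - F x' p') <= B * Rabs (p - p')).
  { apply (mvt_Rabs_bound (fun q => F x' q) (fun q => Fp x' q)). intros z Hz. split.
    - apply HD; auto.
    - apply HB; auto. apply Rabs_between with p p'; auto. }
  pose proof (Rabs_triang (F x p - F x' p) (F x' p - F x' p')).
  replace (F x p - F x' p + (F x' p - F x' p')) with (F x p - F x' p') in H by ring. lra.
Qed.

(* The regularity of (H1) that is actually used: C^2 on K x R, with only the second
   derivatives required to be jointly continuous. *)
Definition C2_on_K (k : Kdom) (H Hx Hp Hxx Hxp Hpx Hpp : R -> R -> R) : Prop :=
  forall x p, inK k x ->
    derivable_pt_lim (fun y => H y p) x (Hx x p) /\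
    derivable_pt_lim (fun q => H x q) p (Hp x p) /\
    derivable_pt_lim (fun y => Hx y p) x (Hxx x p) /\
    derivable_pt_lim (fun q => Hx x q) p (Hxp x p) /\
    derivable_pt_lim (fun y => Hp y p) x (Hpx x p) /\
    derivable_pt_lim (fun q => Hp x q) p (Hpp x p) /\
    cont2 Hxx x p /\ cont2 Hxp x p /\ cont2 Hpx x p /\ cont2 Hpp x p /\ 0 < Hpp x p.

Definition hamilton_flow (k : Kdom) (Hx Hp : R -> R -> R) (t : R) (X P : R -> R) : Prop :=
  forall s, 0 <= s <= t -> inK k (X s) /\
    deriv_within 0 t X s (Hp (X s) (P s)) /\ deriv_within 0 t P s (- Hx (X s) (P s)).

Lemma hamilton_flow_continuous k Hx Hp t X P :
  hamilton_flow k Hx Hp t X P -> continuous_on 0 t X /\ continuous_on 0 t P.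
Proof.
  intros F. split; apply deriv_within_continuous_on; intros s Hs;
    destruct (F s Hs) as (_ & DX & DP); eauto.
Qed.

Lemma hamilton_flow_derivable k Hx Hp t X P : hamilton_flow k Hx Hp t X P ->
  forall s, 0 < s < t -> derivable_pt_lim X s (Hp (X s) (P s)) /\
                         derivable_pt_lim P s (- Hx (X s) (P s)).
Proof.
  intros F s Hs. destruct (F s ltac:(lra)) as (_ & DX & DP).
  split; eapply deriv_within_derivable_pt_lim; eauto.
Qed.

Lemma derivative_zero_at_min f m l : derivable_pt_lim f m l -> (forall p, f m <= f p) -> l = 0.
Proof.
  intros Hd Hm. pose (pr := exist (fun l => derivable_pt_lim f m l) l Hd).
  rewrite <- (derive_pt_eq_0 f m l pr Hd).
  apply deriv_minimum with (m - 1) (m + 1); try lra. intros; apply Hm.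
Qed.

(* On the faces of the quadrant [Y, +oo) x [Q, +oo) the Hamiltonian vector field points
   inwards (or is tangent). *)
Definition quadrant_barrier (k : Kdom) (Hx Hp : R -> R -> R) (Y Q : R) : Prop :=
  inK k Y /\ (forall r, Q <= r -> 0 <= Hp Y r) /\ (forall z, inK k z -> Y <= z -> 0 <= - Hx z Q).

Section Hamiltonian.

Variable k : Kdom.
Variables H Hx Hp Hxx Hxp Hpx Hpp : R -> R -> R.
Hypothesis regular : C2_on_K k H Hx Hp Hxx Hxp Hpx Hpp.

Lemma Hp_strictly_increasing x p1 p2 : inK k x -> p1 < p2 -> Hp x p1 < Hp x p2.
Proof.
  intros HxK Hlt.
  destruct (MVT_cor2 (fun q => Hp x q) (Hpp x) p1 p2 Hlt) as [c [Hc Hc']].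
  { intros c _. apply (regular x c HxK). }
  destruct (regular x c HxK) as (_&_&_&_&_&_&_&_&_&_&Hpos). simpl in Hc. nra.
Qed.

Lemma Hp_argmin_zero x m : inK k x -> is_argmin H x m -> Hp x m = 0.
Proof.
  intros HxK Hm. apply derivative_zero_at_min with (fun q => H x q) m; auto.
  apply (regular x m HxK).
Qed.

Lemma hamiltonian_locally_lipschitz x0 p0 : inK k x0 -> exists d B, 0 < d /\ 0 < B /\
  forall x p x' p', inK k x -> inK k x' -> Rabs (x - x0) < d -> Rabs (p - p0) < d ->
    Rabs (x' - x0) < d -> Rabs (p' - p0) < d ->
    Rabs (Hp x p - Hp x' p') <= B * (Rabs (x - x') + Rabs (p - p')) /\
    Rabs (Hx x p - Hx x' p') <= B * (Rabs (x - x') + Rabs (p - p')).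
Proof.
  intros Hx0.
  destruct (regular x0 p0 Hx0) as (_&_&_&_&_&_&C1&C2&C3&C4&_).
  destruct (cont2_locally_bounded _ _ _ C1) as [d1 [Hd1 B1]].
  destruct (cont2_locally_bounded _ _ _ C2) as [d2 [Hd2 B2]].
  destruct (cont2_locally_bounded _ _ _ C3) as [d3 [Hd3 B3]].
  destruct (cont2_locally_bounded _ _ _ C4) as [d4 [Hd4 B4]].
  set (B := Rabs (Hxx x0 p0) + Rabs (Hxp x0 p0) + Rabs (Hpx x0 p0) + Rabs (Hpp x0 p0) + 1).
  set (d := Rmin (Rmin d1 d2) (Rmin d3 d4)).
  pose proof (Rabs_pos (Hxx x0 p0)). pose proof (Rabs_pos (Hxp x0 p0)).
  pose proof (Rabs_pos (Hpx x0 p0)). pose proof (Rabs_pos (Hpp x0 p0)).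
  assert (Hdi : d <= d1 /\ d <= d2 /\ d <= d3 /\ d <= d4)
    by (unfold d, Rmin; repeat destruct Rle_dec; lra).
  assert (Bnd : forall x p, Rabs (x - x0) < d -> Rabs (p - p0) < d ->
     Rabs (Hxx x p) <= B /\ Rabs (Hxp x p) <= B /\ Rabs (Hpx x p) <= B /\ Rabs (Hpp x p) <= B).
  { intros x p Ha Hb.
    specialize (B1 x p ltac:(lra) ltac:(lra)). specialize (B2 x p ltac:(lra) ltac:(lra)).
    specialize (B3 x p ltac:(lra) ltac:(lra)). specialize (B4 x p ltac:(lra) ltac:(lra)).
    unfold B; lra. }
  exists d, B. split; [repeat apply Rmin_pos; auto|]. split; [unfold B; lra|].
  intros x p x' p' HxK Hx'K N1 N2 N3 N4. split.
  - apply (lipschitz_of_bounded_partials k Hp Hpx Hpp x0 p0 d B); auto.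
    + intros y q HyK; destruct (regular y q HyK) as (_&_&_&_&a&b&_); auto.
    + intros y q Ha Hb; destruct (Bnd y q Ha Hb) as (_&_&a&b); auto.
  - apply (lipschitz_of_bounded_partials k Hx Hxx Hxp x0 p0 d B); auto.
    + intros y q HyK; destruct (regular y q HyK) as (_&_&a&b&_); auto.
    + intros y q Ha Hb; destruct (Bnd y q Ha Hb) as (a&b&_); auto.
Qed.

(* Let [m > 0] be the largest exit distance on a short interval, reached at time [r] and,
   say, by the [X]-coordinate.  Projecting onto the face [X = Y] costs at most [2 m], so by
   the Lipschitz bound [X] sinks below [Y] at rate at most [2 B m]; over a time shorter than
   [1 / (4 B)] it cannot reach depth [m]. *)
Lemma quadrant_invariant_local t X P Y Q :
  hamilton_flow k Hx Hp t X P -> quadrant_barrier k Hx Hp Y Q ->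
  forall s0, 0 <= s0 < t -> Y <= X s0 -> Q <= P s0 ->
  exists s1, s0 < s1 <= t /\ forall s, s0 <= s <= s1 -> Y <= X s /\ Q <= P s.
Proof.
  intros F (HY & HYp & HQx) s0 Hs0 HX0 HP0.
  destruct (hamilton_flow_continuous _ _ _ _ _ _ F) as [WX WP].
  destruct (F s0 ltac:(lra)) as (Hx0 & _).
  destruct (hamiltonian_locally_lipschitz (X s0) (P s0) Hx0)
    as (d & B & Hd & HB & Lip).
  destruct (WX s0 ltac:(lra) d Hd) as [dx [Hdx WX0]].
  destruct (WP s0 ltac:(lra) d Hd) as [dp [Hdp WP0]].
  set (del := Rmin (Rmin dx dp / 2) (/ (4 * B))).
  assert (HiB : 0 < / (4 * B)) by (apply Rinv_0_lt_compat; lra).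
  assert (Hdel : 0 < del /\ del < dx /\ del < dp /\ del <= / (4 * B))
    by (unfold del, Rmin; repeat destruct Rle_dec; lra).
  set (s1 := Rmin t (s0 + del)).
  assert (Hs1 : s0 < s1 <= t /\ s1 <= s0 + del) by (unfold s1, Rmin; destruct Rle_dec; lra).
  assert (Hshort : 4 * B * (s1 - s0) <= 1).
  { assert (4 * B * (s1 - s0) <= 4 * B * / (4 * B)) by (apply Rmult_le_compat_l; lra).
    rewrite Rinv_r in H0 by lra. lra. }
  assert (Near : forall s, s0 <= s <= s1 -> Rabs (X s - X s0) < d /\ Rabs (P s - P s0) < d).
  { intros s Hs. assert (Rabs (s - s0) < dx /\ Rabs (s - s0) < dp)
      by (unfold Rabs; destruct Rcase_abs; split; lra).
    split; [apply WX0|apply WP0]; tauto || lra. }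
  assert (InK : forall s, s0 <= s <= s1 -> inK k (X s)) by (intros s Hs; apply (F s); lra).
  exists s1. split; [lra|].
  set (V := fun s => Rmax (Y - X s) (Q - P s)).
  destruct (continuous_on_attains_max s0 s1 V ltac:(lra)) as [r [Hr Hmax]].
  { apply continuous_on_Rmax_gap; eapply continuous_on_sub; eauto; lra. }
  set (m := V r) in Hmax.
  assert (Vle : forall s, s0 <= s <= s1 -> Y - X s <= m /\ Q - P s <= m).
  { intros s Hs. specialize (Hmax s Hs). unfold V in Hmax.
    pose proof (Rmax_l (Y - X s) (Q - P s)). pose proof (Rmax_r (Y - X s) (Q - P s)). lra. }
  intros s Hs. destruct (Rle_dec m 0) as [Hm|Hm]; [destruct (Vle s Hs); lra|exfalso].
  assert (Hsink : 2 * B * m * (r - s0) <= m / 2).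
  { assert (0 <= m * B) by nra.
    assert (m * B * (r - s0) <= m * B * (s1 - s0)) by (apply Rmult_le_compat_l; lra).
    nra. }
  assert (Hder : forall s, s0 < s < r -> derivable_pt_lim X s (Hp (X s) (P s)) /\
                                      derivable_pt_lim P s (- Hx (X s) (P s)))
    by (intros; apply (hamilton_flow_derivable _ _ _ _ _ _ F); lra).
  destruct (Rle_dec (Q - P r) (Y - X r)) as [Hc|Hc].
  - assert (Em : m = Y - X r) by (unfold m, V, Rmax; destruct Rle_dec; lra).
    assert (Y - 2 * B * m * (r - s0) <= X r); [|lra].
    apply (sink_rate_bound X (fun s => Hp (X s) (P s))); auto; try lra; try nra.
    + eapply continuous_on_sub; eauto; lra.
    + intros z Hz; apply Hder; lra.
    + intros z Hz HzY.
      destruct (Near z ltac:(lra)) as [N1 N2]. destruct (Vle z ltac:(lra)) as [V1 V2].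
      set (Pb := Rmax (P z) Q).
      assert (NY : Rabs (Y - X s0) < d) by (apply Rabs_mid_near with (X z); [exact N1|lra]).
      assert (NPb : Rabs (Pb - P s0) < d) by (apply Rabs_Rmax_near; auto).
      destruct (Lip (X z) (P z) Y Pb (InK z ltac:(lra)) HY N1 N2 NY NPb) as [L _].
      assert (Rabs (X z - Y) + Rabs (P z - Pb) <= 2 * m)
        by (unfold Pb, Rmax, Rabs; destruct Rle_dec; repeat destruct Rcase_abs; lra).
      assert (B * (Rabs (X z - Y) + Rabs (P z - Pb)) <= B * (2 * m))
        by (apply Rmult_le_compat_l; lra).
      specialize (HYp Pb (Rmax_r _ _)).
      revert L; unfold Rabs at 1; destruct Rcase_abs; lra.
  - assert (Em : m = Q - P r) by (unfold m, V, Rmax; destruct Rle_dec; lra).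
    assert (Q - 2 * B * m * (r - s0) <= P r); [|lra].
    apply (sink_rate_bound P (fun s => - Hx (X s) (P s))); auto; try lra; try nra.
    + eapply continuous_on_sub; eauto; lra.
    + intros z Hz; apply Hder; lra.
    + intros z Hz HzQ.
      destruct (Near z ltac:(lra)) as [N1 N2]. destruct (Vle z ltac:(lra)) as [V1 V2].
      set (Xb := Rmax (X z) Y).
      assert (HXb : inK k Xb) by (apply inK_Rmax; auto; apply InK; lra).
      assert (NXb : Rabs (Xb - X s0) < d) by (apply Rabs_Rmax_near; auto).
      assert (NQ : Rabs (Q - P s0) < d) by (apply Rabs_mid_near with (P z); [exact N2|lra]).
      destruct (Lip (X z) (P z) Xb Q (InK z ltac:(lra)) HXb N1 N2 NXb NQ) as [_ L].
      assert (Rabs (X z - Xb) + Rabs (P z - Q) <= 2 * m)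
        by (unfold Xb, Rmax, Rabs; destruct Rle_dec; repeat destruct Rcase_abs; lra).
      assert (B * (Rabs (X z - Xb) + Rabs (P z - Q)) <= B * (2 * m))
        by (apply Rmult_le_compat_l; lra).
      specialize (HQx Xb HXb (Rmax_r _ _)).
      revert L; unfold Rabs at 1; destruct Rcase_abs; lra.
Qed.


Lemma quadrant_invariant t X P Y Q :
  hamilton_flow k Hx Hp t X P -> quadrant_barrier k Hx Hp Y Q ->
  forall s0, 0 <= s0 <= t -> Y <= X s0 -> Q <= P s0 ->
  forall s, s0 <= s <= t -> Y <= X s /\ Q <= P s.
Proof.
  intros F Bar s0 Hs0 HX0 HP0.
  destruct (hamilton_flow_continuous _ _ _ _ _ _ F) as [WX WP].
  set (E := fun s => s0 <= s <= t /\ forall r, s0 <= r <= s -> Y <= X r /\ Q <= P r).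
  assert (Es0 : E s0).
  { split; [lra|]. intros r Hr. replace r with s0 by lra. auto. }
  assert (Hbd : bound E) by (exists t; intros s [Hs _]; lra).
  destruct (completeness E Hbd (ex_intro _ s0 Es0)) as [sg [Hub Hlub]].
  assert (Hsg : s0 <= sg <= t)
    by (split; [apply Hub; exact Es0|apply Hlub; intros s [Hs _]; lra]).
  assert (Before : forall r, s0 <= r < sg -> Y <= X r /\ Q <= P r).
  { intros r Hr. destruct (classic (exists s, E s /\ r < s)) as [[s [[_ Hs] Hrs]]|Hn].
    - apply Hs; lra.
    - assert (sg <= r); [|lra]. apply Hlub. intros s Es.
      destruct (Rle_dec s r); auto. exfalso; apply Hn; exists s; split; auto; lra. }
  assert (At : Y <= X sg /\ Q <= P sg).
  { split; [apply (continuous_on_closed_ge X 0 t s0 sg Y)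
           |apply (continuous_on_closed_ge P 0 t s0 sg Q)]; auto; try lra;
      intros r Hr; apply Before; auto. }
  assert (Hsgt : sg = t).
  { destruct (Req_dec sg t) as [|Hne]; auto. exfalso.
    destruct (quadrant_invariant_local t X P Y Q F Bar sg ltac:(lra) (proj1 At) (proj2 At))
      as [s1 [Hs1 After]].
    assert (s1 <= sg); [|lra]. apply Hub. split; [lra|].
    intros r Hr. destruct (Rlt_dec r sg); [apply Before|apply After]; lra. }
  intros s Hs. destruct (Rlt_dec s sg); [apply Before; lra|]. replace s with sg by lra. auto.
Qed.

Lemma argmin_exists :
  (forall x, inK k x -> H x 0 = 0) ->
  (forall C, compact_in_int k C ->
     forall M, exists R0, forall p x, R0 < Rabs p -> C x -> M <= H x p / Rabs p) ->
  forall x, inKint k x -> exists m, is_argmin H x m.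
Proof.
  intros Hz0 Hsuperlin x Hxi.
  assert (HxK := inKint_inK k x Hxi).
  assert (Cx : compact_in_int k (fun c => x <= c <= x)).
  { split; [apply compact_P3|]. intros c Hc. replace c with x by lra. auto. }
  destruct (Hsuperlin _ Cx 1) as [R0 HR0].
  set (R1 := Rabs R0 + 1).
  assert (HR1 : 0 < R1 /\ R0 < R1) by (unfold R1, Rabs; destruct Rcase_abs; lra).
  destruct (continuity_ab_min (fun q => H x q) (- R1) R1) as [m [Hm _]]; [lra| |].
  { intros c _. apply derivable_continuous_pt. exists (Hp x c). apply (regular x c HxK). }
  exists m. intros p. destruct (Rle_dec (Rabs p) R1) as [Hp1|Hp1].
  - apply Hm. revert Hp1; unfold Rabs; destruct Rcase_abs; lra.
  - specialize (HR0 p x ltac:(lra) ltac:(lra)).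
    assert (Rabs p <= H x p).
    { replace (H x p) with (H x p / Rabs p * Rabs p) by (field; lra). nra. }
    specialize (Hm 0 ltac:(lra)). simpl in Hm. rewrite Hz0 in Hm by auto. lra.
Qed.

(* Near [∂_+] the minimiser of [H(x, .)] exceeds [Q], so [∂_p H(x, Q) < 0] there; at the
   endpoint [x = 1] of [K = [-1,1]] only the limit [<= 0] survives. *)
Lemma Hp_nonpos_near_dplus :
  (forall x, inKint k x -> exists m, is_argmin H x m) ->
  (forall M, exists a, inKint k a /\ forall x q, near_dplus k a x -> is_argmin H x q -> M < q) ->
  forall Q, exists a, inKint k a /\ forall x, inK k x -> a < x -> Hp x Q <= 0.
Proof.
  intros Hargmin H4plus Q. destruct (H4plus Q) as (a & Hai & Ha).
  assert (Hneg : forall x, inK k x -> a < x -> lt_dplus k x -> Hp x Q < 0).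
  { intros x HxK Hax Hxd.
    assert (Hxi : inKint k x) by (destruct k; simpl in *; lra).
    destruct (Hargmin x Hxi) as [m Hm].
    assert (HQm : Q < m) by (apply (Ha x m); auto; destruct k; simpl in *; lra).
    rewrite <- (Hp_argmin_zero x m HxK Hm). apply Hp_strictly_increasing; auto. }
  exists a. split; auto. intros x HxK Hax. destruct k.
  - left; apply Hneg; simpl; auto.
  - destruct (Rlt_dec x 1) as [Hx1|Hx1]; [left; apply Hneg; simpl; auto|].
    simpl in HxK, Hai. replace x with 1 in * by lra.
    apply (le_0_of_continuity_left (fun y => Hp y Q) 1 a); [lra| |].
    + destruct (regular 1 Q HxK) as (_&_&_&_&D&_).
      exact (derivable_continuous_pt _ _ (exist _ _ D)).
    + intros y Hy. apply Hneg; simpl; lra.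
Qed.

Lemma no_excursion_above :
  (forall x, inKint k x -> exists m, is_argmin H x m) ->
  (forall M, exists a, inKint k a /\ forall x q, near_dplus k a x -> is_argmin H x q -> M < q) ->
  (forall u, lt_dplus k u -> exists Y Q, u < Y /\ lt_dplus k Y /\ quadrant_barrier k Hx Hp Y Q) ->
  forall u, lt_dplus k u -> exists w, u <= w /\ lt_dplus k w /\
   forall v, w < v -> forall t X P, 0 <= t -> hamilton_flow k Hx Hp t X P ->
     X 0 < v -> X t < u -> forall s, 0 <= s <= t -> X s < v.
Proof.
  intros Hargmin H4plus Hbarrier u Hu.
  destruct (Hbarrier u Hu) as (Y & Q & HuY & HYd & Bar).
  destruct (Hp_nonpos_near_dplus Hargmin H4plus Q) as (a & Hai & HpQ).
  exists (Rmax (Rmax a Y) u).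
  assert (Hw : a <= Rmax (Rmax a Y) u /\ Y <= Rmax (Rmax a Y) u /\ u <= Rmax (Rmax a Y) u)
    by (unfold Rmax; repeat destruct Rle_dec; lra).
  split; [lra|]. split.
  { destruct k; simpl in *; auto. unfold Rmax; repeat destruct Rle_dec; lra. }
  intros v Hwv t X P Ht F HX0 HXt s Hs.
  destruct (Rlt_dec (X s) v) as [|Hn]; auto. exfalso.
  destruct (hamilton_flow_continuous _ _ _ _ _ _ F) as [WX _].
  destruct (continuous_on_attains_max 0 t X Ht WX) as [ss [Hss Hmax]].
  assert (Hv : v <= X ss) by (specialize (Hmax s Hs); lra).
  assert (Hss' : 0 < ss < t)
    by (destruct (Req_dec ss 0) as [->|]; [lra|]; destruct (Req_dec ss t) as [->|]; lra).
  destruct (F ss ltac:(lra)) as (HK & _).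
  assert (Hcrit : Hp (X ss) (P ss) = 0).
  { destruct (hamilton_flow_derivable _ _ _ _ _ _ F ss Hss') as [DX _].
    pose (pr := exist (fun l => derivable_pt_lim X ss l) _ DX).
    rewrite <- (derive_pt_eq_0 X ss _ pr DX).
    apply deriv_maximum with 0 t; try lra. intros; apply Hmax; lra. }
  assert (HQP : Q <= P ss).
  { destruct (Rle_dec Q (P ss)) as [|Hn2]; auto.
    pose proof (Hp_strictly_increasing (X ss) (P ss) Q HK ltac:(lra)).
    pose proof (HpQ (X ss) HK ltac:(lra)). lra. }
  destruct (quadrant_invariant t X P Y Q F Bar ss ltac:(lra) ltac:(lra) HQP t ltac:(lra)).
  lra.
Qed.

End Hamiltonian.

Lemma C2_on_K_of_strip k eps H Hx Hp Hxx Hxp Hpx Hpp : 0 < eps ->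
  C2_on (strip k eps) H Hx Hp Hxx Hxp Hpx Hpp -> (forall x p, inK k x -> Hpp x p > 0) ->
  C2_on_K k H Hx Hp Hxx Hxp Hpx Hpp.
Proof.
  intros Heps HC2 Hpos x p HxK.
  assert (Hs : strip k eps x) by (destruct k; simpl in *; auto; lra).
  destruct (HC2 x p Hs) as (d1&d2&d3&d4&d5&d6&_&_&_&c4&c5&c6&c7).
  repeat split; auto. apply Hpos; auto.
Qed.

Lemma hamilton_flow_of_sol k H Hx Hp Hxx Hxp Hpx Hpp t X P :
  C2_on_K k H Hx Hp Hxx Hxp Hpx Hpp -> hamilton_sol k H t X P -> hamilton_flow k Hx Hp t X P.
Proof.
  intros G Hsol s Hs. destruct (Hsol s Hs) as (HK & a & b & DX & DP & Ha & Hb).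
  destruct (G (X s) (P s) HK) as (Dx & Dp & _).
  rewrite (uniqueness_limite _ _ _ _ Dp Ha), (uniqueness_limite _ _ _ _ Dx Hb), Ropp_involutive.
  auto.
Qed.

Definition reflect (F : R -> R -> R) : R -> R -> R := fun x p => F (- x) (- p).
Definition reflect_opp (F : R -> R -> R) : R -> R -> R := fun x p => - F (- x) (- p).

Lemma derivable_pt_lim_comp_opp f x l :
  derivable_pt_lim f (- x) l -> derivable_pt_lim (fun y => f (- y)) x (- l).
Proof. intros Hf. apply derivable_pt_lim_mirr_fwd. rewrite Ropp_involutive. exact Hf. Qed.

Lemma derivable_pt_lim_opp_comp_opp f x l :
  derivable_pt_lim f (- x) l -> derivable_pt_lim (fun y => - f (- y)) x l.
Proof.
  intros Hf. apply (derivable_pt_lim_opp_fwd (fun y => f (- y))).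
  apply derivable_pt_lim_comp_opp, Hf.
Qed.

Lemma cont2_reflect f x p : cont2 f (- x) (- p) -> cont2 (reflect f) x p.
Proof.
  intros Hf e He. destruct (Hf e He) as [d [Hd Hd']]. exists d; split; auto.
  intros x' p' H1 H2. apply Hd'.
  - replace (- x' - - x) with (- (x' - x)) by ring. rewrite Rabs_Ropp; auto.
  - replace (- p' - - p) with (- (p' - p)) by ring. rewrite Rabs_Ropp; auto.
Qed.

Lemma C2_on_K_reflect k H Hx Hp Hxx Hxp Hpx Hpp : C2_on_K k H Hx Hp Hxx Hxp Hpx Hpp ->
  C2_on_K k (reflect H) (reflect_opp Hx) (reflect_opp Hp)
    (reflect Hxx) (reflect Hxp) (reflect Hpx) (reflect Hpp).
Proof.
  intros G x p HxK.
  destruct (G (- x) (- p) (inK_opp _ _ HxK)) as (d1&d2&d3&d4&d5&d6&c1&c2&c3&c4&pos).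
  repeat split; auto using cont2_reflect.
  - exact (derivable_pt_lim_comp_opp (fun y => H y (- p)) x _ d1).
  - exact (derivable_pt_lim_comp_opp (fun q => H (- x) q) p _ d2).
  - exact (derivable_pt_lim_opp_comp_opp (fun y => Hx y (- p)) x _ d3).
  - exact (derivable_pt_lim_opp_comp_opp (fun q => Hx (- x) q) p _ d4).
  - exact (derivable_pt_lim_opp_comp_opp (fun y => Hp y (- p)) x _ d5).
  - exact (derivable_pt_lim_opp_comp_opp (fun q => Hp (- x) q) p _ d6).
Qed.

Lemma deriv_within_opp a b f s l :
  deriv_within a b f s l -> deriv_within a b (fun s => - f s) s (- l).
Proof.
  intros Hf e He. destruct (Hf e He) as [d [Hd Hd']]. exists d; split; auto.
  intros h Hh Hhd Hin. specialize (Hd' h Hh Hhd Hin).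
  replace ((- f (s + h) - - f s) / h - - l) with (- ((f (s + h) - f s) / h - l))
    by (field; auto).
  rewrite Rabs_Ropp; auto.
Qed.

Lemma hamilton_flow_reflect k Hx Hp t X P : hamilton_flow k Hx Hp t X P ->
  hamilton_flow k (reflect_opp Hx) (reflect_opp Hp) t (fun s => - X s) (fun s => - P s).
Proof.
  intros F s Hs. destruct (F s Hs) as (HK & DX & DP).
  unfold reflect_opp. rewrite !Ropp_involutive.
  split; [apply inK_opp; auto|split].
  - exact (deriv_within_opp _ _ _ _ _ DX).
  - rewrite <- (Ropp_involutive (Hx (X s) (P s))) at 1. exact (deriv_within_opp _ _ _ _ _ DP).
Qed.

Lemma argmin_exists_reflect k H :
  (forall x, inKint k x -> exists m, is_argmin H x m) ->
  forall x, inKint k x -> exists m, is_argmin (reflect H) x m.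
Proof.
  intros Hargmin x Hxi. destruct (Hargmin (- x) (inKint_opp _ _ Hxi)) as [m Hm].
  exists (- m). intros q. unfold reflect. rewrite Ropp_involutive. apply Hm.
Qed.

Lemma H4_reflect k H : H4 k H ->
  forall M, exists a, inKint k a /\ forall x q, near_dplus k a x -> is_argmin (reflect H) x q -> M < q.
Proof.
  intros [H4minus _] M. destruct (H4minus M) as [a [Ha Ha']].
  exists (- a). split; [apply inKint_opp; auto|].
  intros x q Hn Hq.
  assert (Hq' : is_argmin H (- x) (- q)).
  { intros p'. specialize (Hq (- p')). unfold reflect in Hq. rewrite Ropp_involutive in Hq. exact Hq. }
  assert (Hn' : near_dminus k a (- x)) by (destruct k; simpl in *; lra).
  specialize (Ha' _ _ Hn' Hq'). lra.
Qed.

Lemma cv_dplus_exceeds k y u : cv_dplus k y -> lt_dplus k u -> exists n, u < y n.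
Proof.
  destruct k; simpl; intros Hcv Hu.
  - destruct (Hcv u) as [N HN]. exists N. apply HN. lia.
  - destruct (Hcv (1 - u) ltac:(lra)) as [N HN]. exists N.
    specialize (HN N ltac:(lia)). unfold R_dist in HN. revert HN; unfold Rabs; destruct Rcase_abs; lra.
Qed.

Lemma cv_dminus_exceeds k y u : cv_dminus k y -> lt_dplus k u -> exists n, u < - y n.
Proof.
  destruct k; simpl; intros Hcv Hu.
  - destruct (Hcv u) as [N HN]. exists N. apply HN. lia.
  - destruct (Hcv (1 - u) ltac:(lra)) as [N HN]. exists N.
    specialize (HN N ltac:(lia)). unfold R_dist in HN. revert HN; unfold Rabs; destruct Rcase_abs; lra.
Qed.

Lemma barrier_of_H5 k H Hx Hp Hxx Hxp Hpx Hpp : C2_on_K k H Hx Hp Hxx Hxp Hpx Hpp -> H5 k H ->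
  forall u, lt_dplus k u -> exists Y Q, u < Y /\ lt_dplus k Y /\ quadrant_barrier k Hx Hp Y Q.
Proof.
  intros G [(y & q & Hyq & Hcv & _ & Hp_pos & Hx_neg) _] u Hu.
  destruct (cv_dplus_exceeds k y u Hcv Hu) as [n Hn].
  destruct (Hyq n) as [Hyi _].
  assert (HyK := inKint_inK k _ Hyi).
  exists (y n), (q n). split; [auto|split; [destruct k; simpl in *; lra|split; [auto|split]]].
  - intros r Hr. destruct (G (y n) r HyK) as (_ & D & _).
    specialize (Hp_pos n r _ Hr D). lra.
  - intros z Hz Hyz. destruct (G z (q n) Hz) as (D & _).
    specialize (Hx_neg n z _ Hz Hyz D). lra.
Qed.

Lemma barrier_of_H5_reflect k H Hx Hp Hxx Hxp Hpx Hpp : C2_on_K k H Hx Hp Hxx Hxp Hpx Hpp ->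
  H5 k H -> forall u, lt_dplus k u ->
  exists Y Q, u < Y /\ lt_dplus k Y /\ quadrant_barrier k (reflect_opp Hx) (reflect_opp Hp) Y Q.
Proof.
  intros G [_ (y & q & Hyq & Hcv & _ & Hp_neg & Hx_pos)] u Hu.
  destruct (cv_dminus_exceeds k y u Hcv Hu) as [n Hn].
  destruct (Hyq n) as [Hyi _].
  assert (HyK := inKint_inK k _ Hyi).
  exists (- y n), (- q n).
  split; [auto|split; [destruct k; simpl in *; lra|split; [apply inK_opp; auto|split]]].
  - intros r Hr. unfold reflect_opp. rewrite Ropp_involutive.
    destruct (G (y n) (- r) HyK) as (_ & D & _).
    specialize (Hp_neg n (- r) _ ltac:(lra) D). lra.
  - intros z Hz Hyz. unfold reflect_opp. rewrite !Ropp_involutive.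
    destruct (G (- z) (q n) (inK_opp _ _ Hz)) as (D & _).
    specialize (Hx_pos n (- z) _ (inK_opp _ _ Hz) ltac:(lra) D). lra.
Qed.

Lemma lt_dplus_dense k w : lt_dplus k w -> exists v, w < v /\ lt_dplus k v.
Proof.
  destruct k; simpl; intros Hw; [exists (w + 1)|exists ((w + 1) / 2)]; split; auto; lra.
Qed.

Theorem mainTheorem11 (k : Kdom) (H : R -> R -> R) (hH : condH k H)
  (u : R) (hu0 : 0 < u) (hu1 : lt_dplus k u) :
  exists v, u < v /\ lt_dplus k v /\
    forall (t x p : R) (X P : R -> R),
      0 <= t -> -v < x < v ->
      hamilton_sol k H t X P -> X 0 = x -> P 0 = p ->
      -u < X t < u ->
      forall s, 0 <= s <= t -> -v < X s < v.
Proof.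
  destruct hH as (Hz0 & (eps & Heps & Hx & Hp & Hxx & Hxp & Hpx & Hpp & HC2 & Hpos)
                  & _ & [Hsuperlin _] & HH4 & HH5).
  assert (G := C2_on_K_of_strip k eps H Hx Hp Hxx Hxp Hpx Hpp Heps HC2 Hpos).
  assert (Hargmin := argmin_exists k H Hx Hp Hxx Hxp Hpx Hpp G Hz0 Hsuperlin).
  destruct (no_excursion_above k H Hx Hp Hxx Hxp Hpx Hpp G Hargmin (proj2 HH4)
              (barrier_of_H5 k H Hx Hp Hxx Hxp Hpx Hpp G HH5) u hu1) as (w1 & Huw1 & Hw1 & Above).
  destruct (no_excursion_above k _ _ _ _ _ _ _ (C2_on_K_reflect k H Hx Hp Hxx Hxp Hpx Hpp G)
              (argmin_exists_reflect k H Hargmin) (H4_reflect k H HH4)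
              (barrier_of_H5_reflect k H Hx Hp Hxx Hxp Hpx Hpp G HH5) u hu1)
    as (w2 & _ & Hw2 & Below).
  destruct (lt_dplus_dense k (Rmax w1 w2)) as (v & Hv & Hvd).
  { unfold Rmax; destruct Rle_dec; auto. }
  pose proof (Rmax_l w1 w2). pose proof (Rmax_r w1 w2).
  exists v. split; [lra|]. split; [auto|].
  intros t x p X P Ht Hx0 Hsol HX0 _ HXt s Hs.
  assert (F := hamilton_flow_of_sol k H Hx Hp Hxx Hxp Hpx Hpp t X P G Hsol).
  assert (A1 := Above v ltac:(lra) t X P Ht F ltac:(lra) ltac:(lra) s Hs).
  assert (A2 := Below v ltac:(lra) t _ _ Ht (hamilton_flow_reflect k Hx Hp t X P F)
                  ltac:(lra) ltac:(lra) s Hs).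
  lra.
Qed.
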